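(* Let $(X,d)$ be a metric space, let $x_0\in X$ and $r\ge 0$, and let $C_{x_0,r}=\{x\in X: d(x_0,x)=r\}$. Define $\varphi:X\to[0,\infty)$ by $\varphi(x)=d(x,x_0)$ for all $x\in X$. If there exist a self-mapping $T:X\to X$ and some $h\in[0,1)$ such that (C1)** $d(x,Tx)\le \varphi(x)-\varphi(Tx)$ and (C2)** $h\,d(x,Tx)+d(Tx,x_0)\ge r$ for each $x\in C_{x_0,r}$, then $C_{x_0,r}$ is a fixed circle of $T$, i.e. $Tx=x$ for every $x\in C_{x_0,r}$.
   Context: For a metric space $(X,d)$, the circle with center $x_0\in X$ and radius $r$ is $C_{x_0,r}=\{x\in X: d(x_0,x)=r\}$. For a self-mapping $T:X\to X$, the circle $C_{x_0,r}$ is called a fixed circle of $T$ if $Tx=x$ for every $x\in C_{x_0,r}$. *)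

From Stdlib Require Import Reals.
Open Scope R_scope.

Definition is_metric {X : Type} (d : X -> X -> R) : Prop :=
  (forall x y, 0 <= d x y) /\
  (forall x y, d x y = 0 <-> x = y) /\
  (forall x y, d x y = d y x) /\
  (forall x y z, d x z <= d x y + d y z).

Definition circle {X : Type} (d : X -> X -> R) (x0 : X) (r : R) : X -> Prop :=
  fun x => d x0 x = r.

Definition fixed_circle {X : Type} (d : X -> X -> R) (x0 : X) (r : R)
  (T : X -> X) : Prop :=
  forall x, circle d x0 r x -> T x = x.

From Stdlib Require Import Reals Lra Psatz.
Open Scope R_scope.

Lemma Rle_contraction_eq_0 (a h : R) : 0 <= a -> h < 1 -> a <= h * a -> a = 0.
Proof. intros Ha Hh Hle. nra. Qed.

Theorem theorem2p15 (X : Type) (d : X -> X -> R) (hd : is_metric d)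
  (x0 : X) (r : R) (hr : 0 <= r) (T : X -> X) (h : R)
  (hh0 : 0 <= h) (hh1 : h < 1) :
  let phi := fun x => d x x0 in
  (forall x, circle d x0 r x ->
     d x (T x) <= phi x - phi (T x) /\
     h * d x (T x) + d (T x) x0 >= r) ->
  fixed_circle d x0 r T.
Proof.
  intros phi HT x Hx.
  destruct hd as [Hpos [Hzero [Hsym _]]].
  destruct (HT x Hx) as [HC1 HC2].
  unfold phi, circle in *.
  (* On the circle phi x = r, so (C1) and (C2) chain into
     d(x,Tx) <= r - d(Tx,x0) <= h d(x,Tx). *)
  assert (Hshrink : d x (T x) <= h * d x (T x)).
  { rewrite Hsym in Hx. lra. }
  symmetry. apply Hzero.
  exact (Rle_contraction_eq_0 _ _ (Hpos x (T x)) hh1 Hshrink).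
Qed.
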